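(* Consider the dynamic panel logit AR(2) model with $T=4$: binary outcomes $Y_{-1},Y_0,Y_1,\dots,Y_4\in\{0,1\}$, regressors $X=(X_1,\dots,X_4)\in\mathbb{R}^{K\times4}$, fixed effect $A\in\mathbb{R}$, with, for $t\in\{1,\dots,4\}$, $$\Pr(Y_t=1\mid Y_{-1},\dots,Y_{t-1},X,A)=\frac{\exp(X_t'\beta_0+Y_{t-1}\gamma_{0,1}+Y_{t-2}\gamma_{0,2}+A)}{1+\exp(X_t'\beta_0+Y_{t-1}\gamma_{0,1}+Y_{t-2}\gamma_{0,2}+A)}$$ and true parameters $\beta_0\in\mathbb{R}^K$, $\gamma_0=(\gamma_{0,1},\gamma_{0,2})\in\mathbb{R}^2$. For initial conditions $y^{(0)}=(y_{-1},y_0)\in\{0,1\}^2$, $y=(y_1,\dots,y_4)\in\{0,1\}^4$, $x\in\mathbb{R}^{K\times4}$, $\beta\in\mathbb{R}^K$, $\gamma=(\gamma_1,\gamma_2)\in\mathbb{R}^2$, let $z_t=x_t'\beta+y_{t-1}\gamma_1+y_{t-2}\gamma_2$ and $z_{ts}=z_t-z_s$. Define $$m^{(a)}_{y^{(0)}}=\begin{cases}e^{z_{23}}-e^{z_{43}}&y=(0,0,1,0),\\ e^{z_{24}}-1&y=(0,0,1,1),\\ -1&(y_1,y_2)=(0,1),\\ e^{z_{41}+\gamma_1}&(y_1,y_2,y_3)=(1,0,0),\\ e^{z_{41}}[1+e^{z_{23}}-e^{z_{43}}]&y=(1,0,1,0),\\ e^{z_{21}}&y=(1,0,1,1),\\ 0&\text{otherwise},\end{cases}\qquad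 m^{(b)}_{y^{(0)}}=\begin{cases}e^{z_{12}}&y=(0,1,0,0),\\ e^{z_{14}}[1+e^{z_{32}}-e^{z_{34}}]&y=(0,1,0,1),\\ e^{z_{14}+\gamma_1}&(y_1,y_2,y_3)=(0,1,1),\\ -1&(y_1,y_2)=(1,0),\\ e^{z_{42}}-1&y=(1,1,0,0),\\ e^{z_{32}}-e^{z_{34}}&y=(1,1,0,1),\\0&\text{otherwise},\end{cases}$$ $$m^{(c)}_{y^{(0)}}=\begin{cases}[e^{z_{24}}-1][1-e^{z_{34}}]&y=(0,0,0,1),\\ e^{z_{24}+\gamma_1}-1&(y_1,y_2,y_3)=(0,0,1),\\ -1&(y_1,y_2)=(0,1),\\ e^{z_{41}}&y=(1,0,0,0),\\ e^{z_{21}}[1+e^{z_{32}}-e^{z_{34}}]&y=(1,0,0,1),\\ e^{z_{21}}&(y_1,y_2,y_3)=(1,0,1),\\0&\text{otherwise},\end{cases}\qquad m^{(d)}_{y^{(0)}}=\begin{cases}e^{z_{12}}&(y_1,y_2,y_3)=(0,1,0),\\ e^{z_{12}}[1+e^{z_{23}}-e^{z_{43}}]&y=(0,1,1,0),\\ e^{z_{14}}&y=(0,1,1,1),\\ -1&(y_1,y_2)=(1,0),\\ e^{z_{42}+\gamma_1}-1&(y_1,y_2,y_3)=(1,1,0),\\ [e^{z_{42}}-1][1-e^{z_{43}}]&y=(1,1,1,0),\\0&\text{otherwise},\end{cases}$$ all as functions of $(y,x,\beta,\gamma)$. Then for all $y^{(0)}\in\{0,1\}^2$, $x\in\mathbb{R}^{K\times4}$,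 $\alpha\in\mathbb{R}$ and $\xi\in\{a,b,c,d\}$, $$\mathbb{E}\big[m^{(\xi)}_{y^{(0)}}(Y,X,\beta_0,\gamma_0)\mid (Y_{-1},Y_0)=y^{(0)},X=x,A=\alpha\big]=0,$$ where $Y=(Y_1,\dots,Y_4)$.
   Context: The joint distribution of the initial conditions, $X$ and $A$ is unrestricted; only the conditional law of $(Y_1,\dots,Y_4)$ given $((Y_{-1},Y_0),X,A)$ is specified by the model. In $z_t$, $y_{-1},y_0$ are the initial conditions. *)

From HB Require Import structures.
From mathcomp Require Import all_boot all_order all_algebra.
From mathcomp Require Import all_classical all_reals all_analysis.
Set Implicit Arguments. Unset Strict Implicit. Unset Printing Implicit Defensive.
Import Order.TTheory GRing.Theory Num.Theory.
Local Open Scope ring_scope.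

Section Defs.
Variables (R : realType) (K : nat).

Definition b2R (b : bool) : R := if b then 1 else 0.

(* Outcome path indexed with offset 2:
   Ypath ym1 y0 y1 y2 y3 y4 (t+1) = y_t  for t = -1, 0, 1, ..., 4. *)
Definition Ypath (ym1 y0 y1 y2 y3 y4 : bool) (i : nat) : bool :=
  match i with
  | 0 => ym1 | 1 => y0 | 2 => y1 | 3 => y2 | 4 => y3 | _ => y4
  end.

(* x_t' beta for t in {1,..,4}; x is K x 4, column t-1 is x_t *)
Definition xbeta (x : 'M[R]_(K, 4)) (beta : 'cV[R]_K) (t : nat) : R :=
  \sum_(k < K) x k (@inord 3 t.-1) * beta k ord0.

Definition zt (x : 'M[R]_(K, 4)) (beta : 'cV[R]_K) (g1 g2 : R)
  (Y : nat -> bool) (t : nat) : R :=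
  xbeta x beta t + b2R (Y t) * g1 + b2R (Y t.-1) * g2.

Inductive moment := mom_a | mom_b | mom_c | mom_d.

Definition mom_fun (xi : moment) (ym1 y0 : bool) (y1 y2 y3 y4 : bool)
  (x : 'M[R]_(K, 4)) (beta : 'cV[R]_K) (g1 g2 : R) : R :=
  let Y := Ypath ym1 y0 y1 y2 y3 y4 in
  let z := zt x beta g1 g2 Y in
  let e t s := expR (z t - z s) in
  match xi with
  | mom_a =>
    match y1, y2, y3, y4 with
    | false, false, true, false => e 2%N 3%N - e 4%N 3%N
    | false, false, true, true => e 2%N 4%N - 1
    | false, true, _, _ => -1
    | true, false, false, _ => expR (z 4%N - z 1%N + g1)
    | true, false, true, false => e 4%N 1%N * (1 + e 2%N 3%N - e 4%N 3%N)
    | true, false, true, true => e 2%N 1%N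
    | _, _, _, _ => 0
    end
  | mom_b =>
    match y1, y2, y3, y4 with
    | false, true, false, false => e 1%N 2%N
    | false, true, false, true => e 1%N 4%N * (1 + e 3%N 2%N - e 3%N 4%N)
    | false, true, true, _ => expR (z 1%N - z 4%N + g1)
    | true, false, _, _ => -1
    | true, true, false, false => e 4%N 2%N - 1
    | true, true, false, true => e 3%N 2%N - e 3%N 4%N
    | _, _, _, _ => 0
    end
  | mom_c =>
    match y1, y2, y3, y4 with
    | false, false, false, true => (e 2%N 4%N - 1) * (1 - e 3%N 4%N)
    | false, false, true, _ => expR (z 2%N - z 4%N + g1) - 1
    | false, true, _, _ => -1
    | true, false, false, false => e 4%N 1%N
    | true, false, false, true => e 2%N 1%N * (1 + e 3%N 2%N - e 3%N 4%N)
    | true, false, true, _ => e 2%N 1%N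
    | _, _, _, _ => 0
    end
  | mom_d =>
    match y1, y2, y3, y4 with
    | false, true, false, _ => e 1%N 2%N
    | false, true, true, false => e 1%N 2%N * (1 + e 2%N 3%N - e 4%N 3%N)
    | false, true, true, true => e 1%N 4%N
    | true, false, _, _ => -1
    | true, true, false, _ => expR (z 4%N - z 2%N + g1) - 1
    | true, true, true, false => (e 4%N 2%N - 1) * (1 - e 4%N 3%N)
    | _, _, _, _ => 0
    end
  end.

Definition logistic (u : R) : R := expR u / (1 + expR u).

(* Pr(Y_t = b | Y_{-1..t-1}, X = x, A = alpha) under the logit AR(2) model *)
Definition step_prob (x : 'M[R]_(K, 4)) (beta0 : 'cV[R]_K) (g1 g2 alpha : R)
  (Y : nat -> bool) (t : nat) : R :=
  let p := logistic (zt x beta0 g1 g2 Y t + alpha) in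
  if Y t.+1 then p else 1 - p.

Definition path_prob (x : 'M[R]_(K, 4)) (beta0 : 'cV[R]_K) (g1 g2 alpha : R)
  (ym1 y0 y1 y2 y3 y4 : bool) : R :=
  let Y := Ypath ym1 y0 y1 y2 y3 y4 in
  \prod_(1 <= t < 5) step_prob x beta0 g1 g2 alpha Y t.

Definition cond_exp (x : 'M[R]_(K, 4)) (beta0 : 'cV[R]_K) (g1 g2 alpha : R)
  (ym1 y0 : bool) (f : bool -> bool -> bool -> bool -> R) : R :=
  \sum_(y1 : bool) \sum_(y2 : bool) \sum_(y3 : bool) \sum_(y4 : bool)
    f y1 y2 y3 y4 * path_prob x beta0 g1 g2 alpha ym1 y0 y1 y2 y3 y4.

End Defs.

From HB Require Import structures.
From mathcomp Require Import all_boot all_order all_algebra.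
From mathcomp Require Import all_classical all_reals all_analysis.
From mathcomp Require Import ring.
Import Order.TTheory GRing.Theory Num.Theory.
Local Open Scope ring_scope.

(* Condition on Y_1.  For m^(a) and m^(c) the conditional mean of the moment
   given Y_1 = 1 is e^{-(z_1 + alpha)} k and given Y_1 = 0 it is -k, with
   k = logistic(x_4'beta + gamma_1 + alpha), resp. logistic(x_4'beta + alpha);
   since Pr(Y_1 = 1) = e^{z_1 + alpha} Pr(Y_1 = 0), the two contributions
   cancel.  Flipping every outcome maps the model with (beta, alpha) to the
   model with (-beta, -alpha - gamma_1 - gamma_2) and reverses every
   difference z_t - z_s, so it exchanges m^(a) with m^(b) and m^(c) with m^(d). *)

Lemma logisticN (R : realType) (u : R) : logistic (- u) = 1 - logistic u.
Proof.
have e_gt0 := expR_gt0 u.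
by rewrite /logistic expRN; field; rewrite ?gt_eqF ?addr_gt0 ?invr_gt0.
Qed.

Lemma logistic_odds (R : realType) (u : R) : logistic u = expR u * (1 - logistic u).
Proof.
have e_gt0 := expR_gt0 u.
by rewrite /logistic; field; rewrite gt_eqF ?addr_gt0.
Qed.

Section FirstPeriod.
Variables (R : realType) (K : nat) (x : 'M[R]_(K, 4)) (beta : 'cV[R]_K).
Variables (g1 g2 alpha : R) (ym1 y0 : bool).

Local Notation z1 := (xbeta x beta 1 + b2R R y0 * g1 + b2R R ym1 * g2).

Definition cond_exp_given_Y1 (f : bool -> bool -> bool -> bool -> R) (y1 : bool) : R :=
  \sum_(y2 : bool) \sum_(y3 : bool) \sum_(y4 : bool)
    f y1 y2 y3 y4 *
    \prod_(2 <= t < 5) step_prob x beta g1 g2 alpha (Ypath ym1 y0 y1 y2 y3 y4) t.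

Lemma cond_exp_by_Y1 f :
  cond_exp x beta g1 g2 alpha ym1 y0 f
  = logistic (z1 + alpha) * cond_exp_given_Y1 f true
    + (1 - logistic (z1 + alpha)) * cond_exp_given_Y1 f false.
Proof.
rewrite /cond_exp /cond_exp_given_Y1 big_bool.
congr (_ + _); rewrite big_distrr; apply: eq_bigr => y2 _;
  rewrite big_distrr; apply: eq_bigr => y3 _;
  rewrite big_distrr; apply: eq_bigr => y4 _;
  by rewrite /path_prob big_ltn // mulrCA.
Qed.

Lemma cond_exp_eq0_by_Y1 f (k : R) :
  cond_exp_given_Y1 f true = expR (- (z1 + alpha)) * k ->
  cond_exp_given_Y1 f false = - k ->
  cond_exp x beta g1 g2 alpha ym1 y0 f = 0.
Proof.
move=> E1 E0; rewrite cond_exp_by_Y1 E1 E0 {1}logistic_odds mulrACA.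
by rewrite -expRD addrN expR0 mul1r mulrN addrN.
Qed.

Local Notation mom xi := (fun y1 y2 y3 y4 => mom_fun xi ym1 y0 y1 y2 y3 y4 x beta g1 g2).

Local Ltac expand_and_field :=
  rewrite /cond_exp_given_Y1 /mom_fun /step_prob /logistic /zt /=;
  rewrite /index_iota /= !big_bool /= !big_cons !big_nil /=;
  rewrite ?(mul1r, mul0r, addr0, add0r, expRD, expRB, expRN, expR0);
  field;
  repeat (apply/andP; split); apply: lt0r_neq0;
  repeat first [ exact: ltr01 | exact: expR_gt0 | apply: addr_gt0
               | apply: mulr_gt0 | rewrite invr_gt0 ].

Lemma cond_exp_given_Y1_mom_a_true :
  cond_exp_given_Y1 (mom mom_a) true
  = expR (- (z1 + alpha)) * logistic (xbeta x beta 4 + g1 + alpha).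
Proof. by expand_and_field. Qed.

Lemma cond_exp_given_Y1_mom_a_false :
  cond_exp_given_Y1 (mom mom_a) false = - logistic (xbeta x beta 4 + g1 + alpha).
Proof. by expand_and_field. Qed.

Lemma cond_exp_given_Y1_mom_c_true :
  cond_exp_given_Y1 (mom mom_c) true
  = expR (- (z1 + alpha)) * logistic (xbeta x beta 4 + alpha).
Proof. by expand_and_field. Qed.

Lemma cond_exp_given_Y1_mom_c_false :
  cond_exp_given_Y1 (mom mom_c) false = - logistic (xbeta x beta 4 + alpha).
Proof. by expand_and_field. Qed.

Lemma cond_exp_mom_a : cond_exp x beta g1 g2 alpha ym1 y0 (mom mom_a) = 0.
Proof.
exact: cond_exp_eq0_by_Y1 cond_exp_given_Y1_mom_a_true cond_exp_given_Y1_mom_a_false.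
Qed.

Lemma cond_exp_mom_c : cond_exp x beta g1 g2 alpha ym1 y0 (mom mom_c) = 0.
Proof.
exact: cond_exp_eq0_by_Y1 cond_exp_given_Y1_mom_c_true cond_exp_given_Y1_mom_c_false.
Qed.

End FirstPeriod.

Section Duality.
Variables (R : realType) (K : nat) (x : 'M[R]_(K, 4)) (beta : 'cV[R]_K) (g1 g2 : R).

Lemma b2R_negb (b : bool) : b2R R (~~ b) = 1 - b2R R b.
Proof. by case: b; rewrite /b2R ?subrr ?subr0. Qed.

Lemma Ypath_negb ym1 y0 y1 y2 y3 y4 :
  Ypath (~~ ym1) (~~ y0) (~~ y1) (~~ y2) (~~ y3) (~~ y4)
  = negb \o Ypath ym1 y0 y1 y2 y3 y4.
Proof. by apply: funext => -[|[|[|[|[|[]]]]]]. Qed.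

Lemma xbetaN t : xbeta x (- beta) t = - xbeta x beta t.
Proof.
by rewrite /xbeta -sumrN; apply: eq_bigr => k _; rewrite mxE mulrN.
Qed.

Lemma zt_negb (Y : nat -> bool) t :
  zt x (- beta) g1 g2 (negb \o Y) t = g1 + g2 - zt x beta g1 g2 Y t.
Proof. by rewrite /zt xbetaN /= !b2R_negb; ring. Qed.

Lemma step_prob_negb alpha (Y : nat -> bool) t :
  step_prob x (- beta) g1 g2 (- (alpha + g1 + g2)) (negb \o Y) t
  = step_prob x beta g1 g2 alpha Y t.
Proof.
rewrite /step_prob zt_negb /=.
have -> : g1 + g2 - zt x beta g1 g2 Y t - (alpha + g1 + g2)
          = - (zt x beta g1 g2 Y t + alpha) by ring.
by rewrite logisticN; case: (Y t.+1) => //=; rewrite subKr.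
Qed.

Lemma path_prob_negb alpha ym1 y0 y1 y2 y3 y4 :
  path_prob x (- beta) g1 g2 (- (alpha + g1 + g2))
    (~~ ym1) (~~ y0) (~~ y1) (~~ y2) (~~ y3) (~~ y4)
  = path_prob x beta g1 g2 alpha ym1 y0 y1 y2 y3 y4.
Proof.
by rewrite /path_prob Ypath_negb; apply: eq_bigr => t _; apply: step_prob_negb.
Qed.

Lemma cond_exp_negb alpha ym1 y0 (f : bool -> bool -> bool -> bool -> R) :
  cond_exp x (- beta) g1 g2 (- (alpha + g1 + g2)) (~~ ym1) (~~ y0) f
  = cond_exp x beta g1 g2 alpha ym1 y0
      (fun y1 y2 y3 y4 => f (~~ y1) (~~ y2) (~~ y3) (~~ y4)).
Proof.
rewrite /cond_exp (reindex_inj negb_inj); apply: eq_bigr => y1 _.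
rewrite (reindex_inj negb_inj); apply: eq_bigr => y2 _.
rewrite (reindex_inj negb_inj); apply: eq_bigr => y3 _.
rewrite (reindex_inj negb_inj); apply: eq_bigr => y4 _.
by rewrite path_prob_negb.
Qed.

Definition moment_dual (xi : moment) : moment :=
  match xi with mom_a => mom_b | mom_b => mom_a | mom_c => mom_d | mom_d => mom_c end.

Lemma mom_fun_dual xi ym1 y0 y1 y2 y3 y4 :
  mom_fun (moment_dual xi) ym1 y0 y1 y2 y3 y4 x beta g1 g2
  = mom_fun xi (~~ ym1) (~~ y0) (~~ y1) (~~ y2) (~~ y3) (~~ y4) x (- beta) g1 g2.
Proof.
have zdiff (z : nat -> R) t s : g1 + g2 - z t - (g1 + g2 - z s) = z s - z t.
  by ring.
rewrite /mom_fun Ypath_negb.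
by case: xi y1 y2 y3 y4 => [] [] [] [] [] /=; rewrite ?zt_negb ?zdiff.
Qed.

Lemma cond_exp_dual alpha ym1 y0 xi :
  cond_exp x beta g1 g2 alpha ym1 y0
    (fun y1 y2 y3 y4 => mom_fun (moment_dual xi) ym1 y0 y1 y2 y3 y4 x beta g1 g2)
  = cond_exp x (- beta) g1 g2 (- (alpha + g1 + g2)) (~~ ym1) (~~ y0)
      (fun y1 y2 y3 y4 => mom_fun xi (~~ ym1) (~~ y0) y1 y2 y3 y4 x (- beta) g1 g2).
Proof.
rewrite cond_exp_negb; congr cond_exp.
by apply/funext => y1; apply/funext => y2; apply/funext => y3; apply/funext => y4;
  rewrite mom_fun_dual.
Qed.

End Duality.

Theorem lemma3 (R : realType) (K : nat) (beta0 : 'cV[R]_K) (g01 g02 : R)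
  (ym1 y0 : bool) (x : 'M[R]_(K, 4)) (alpha : R) (xi : moment) :
  cond_exp x beta0 g01 g02 alpha ym1 y0
    (fun y1 y2 y3 y4 => mom_fun xi ym1 y0 y1 y2 y3 y4 x beta0 g01 g02) = 0.
Proof.
case: xi.
- exact: cond_exp_mom_a.
- by rewrite -[mom_b]/(moment_dual mom_a) cond_exp_dual cond_exp_mom_a.
- exact: cond_exp_mom_c.
- by rewrite -[mom_d]/(moment_dual mom_c) cond_exp_dual cond_exp_mom_c.
Qed.
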